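(* Let $B$ be a commutative ring, let $x,y\in B$ with $Bx+By=B$, let $\alpha\subset B$ be an ideal, and let $\nu_1,\ldots,\nu_p\subset B$ be prime ideals. Suppose that for every $a\in\alpha$ there exists $c_0$ (depending on $a$) such that $x+ay^c\in\bigcup_{i=1}^p\nu_i$ for all $c\ge c_0$. Then $Bx+\alpha\subset\nu_i$ for some $i$. *)

From mathcomp Require Import all_boot all_algebra.
Set Implicit Arguments. Unset Strict Implicit. Unset Printing Implicit Defensive.
Import GRing.Theory.
Local Open Scope ring_scope.

Definition is_ideal (B : comPzRingType) (I : B -> Prop) : Prop :=
  [/\ I 0, (forall a b, I a -> I b -> I (a + b)) & (forall r a, I a -> I (r * a))].

Definition is_prime_ideal (B : comPzRingType) (I : B -> Prop) : Prop :=
  [/\ is_ideal I, ~ I 1 & (forall a b, I (a * b) -> I a \/ I b)].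

(* Suppose no [nu_i] contains [Bx + alpha]; then [alpha] is not contained in
   any [nu_k] containing [x].  Let [D] be the set of those [nu_j] that are not
   contained in any [nu_k] containing [x].  By prime avoidance there is an
   [a] in [alpha] and in every member of [D] which lies outside every [nu_k]
   containing [x].  Then no [nu_i] contains [x + a y^c]: if [nu_i] lies inside
   some [nu_k] containing [x], then [a y^c] would lie in the prime [nu_k], so
   [y] would, and then [1] since [Bx + By = B]; otherwise [nu_i] is in [D],
   contains [a], hence [x], which is absurd. *)
From mathcomp Require Import all_boot all_algebra boolp.
Set Implicit Arguments. Unset Strict Implicit. Unset Printing Implicit Defensive.
Import GRing.Theory.
Local Open Scope ring_scope.

Section Ideals.
Variable B : comPzRingType.

Section IdealTheory.
Variable I : B -> Prop.
Hypothesis I_ideal : is_ideal I.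

Lemma ideal0 : I 0.
Proof. by case: I_ideal. Qed.

Lemma idealD a b : I a -> I b -> I (a + b).
Proof. by case: I_ideal => _ + _; apply. Qed.

Lemma idealMl r a : I a -> I (r * a).
Proof. by case: I_ideal => _ _; apply. Qed.

Lemma idealMr r a : I a -> I (a * r).
Proof. by rewrite mulrC; apply: idealMl. Qed.

Lemma idealDl {a b} : I a -> I (a + b) <-> I b.
Proof.
move=> Ia; split; last exact: idealD.
by move=> /(idealD (idealMl (-1) Ia)); rewrite mulN1r addKr.
Qed.

Lemma idealDr {a b} : I a -> I (b + a) <-> I b.
Proof. by rewrite addrC; apply: idealDl. Qed.

End IdealTheory.

Lemma is_ideal_cap (I1 I2 : B -> Prop) :
  is_ideal I1 -> is_ideal I2 -> is_ideal (fun a => I1 a /\ I2 a).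
Proof.
move=> I1_ideal I2_ideal.
split=> [|a b [I1a I2a] [I1b I2b]|r a [I1a I2a]]; split.
- exact: (ideal0 I1_ideal).
- exact: (ideal0 I2_ideal).
- exact: (idealD I1_ideal I1a I1b).
- exact: (idealD I2_ideal I2a I2b).
- exact: (idealMl I1_ideal r I1a).
- exact: (idealMl I2_ideal r I2a).
Qed.

Lemma is_ideal_bigcap (J : Type) (D : J -> Prop) (Q : J -> B -> Prop) :
  (forall j, D j -> is_ideal (Q j)) -> is_ideal (fun a => forall j, D j -> Q j a).
Proof.
move=> Q_ideal; split=> [j Dj|a b Qa Qb j Dj|r a Qa j Dj].
- exact: (ideal0 (Q_ideal j Dj)).
- exact: (idealD (Q_ideal j Dj) (Qa j Dj) (Qb j Dj)).
- exact: (idealMl (Q_ideal j Dj) r (Qa j Dj)).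
Qed.

Section PrimeIdealTheory.
Variable P : B -> Prop.
Hypothesis P_prime : is_prime_ideal P.

Lemma prime_ideal_ideal : is_ideal P.
Proof. by case: P_prime. Qed.

Lemma prime_ideal_neq1 : ~ P 1.
Proof. by case: P_prime. Qed.

Lemma prime_idealMn a b : ~ P a -> ~ P b -> ~ P (a * b).
Proof. by case: P_prime => _ _ Pmul nPa nPb /Pmul []. Qed.

Lemma prime_idealX a n : P (a ^+ n) -> P a.
Proof.
elim: n => [|n IHn]; first by rewrite expr0 => /prime_ideal_neq1.
by rewrite exprS; case: P_prime => _ _ Pmul /Pmul [].
Qed.

Lemma prime_ideal_comax_notin x y a c :
  (exists u v, u * x + v * y = 1) -> P x -> ~ P a -> ~ P (x + a * y ^+ c).
Proof.
move=> [u [v uv1]] Px nPa /(idealDl prime_ideal_ideal Px).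
case: P_prime => _ _ Pmul /Pmul [//|/prime_idealX Py].
have P_ideal := prime_ideal_ideal.
apply: prime_ideal_neq1; rewrite -uv1.
exact: (idealD P_ideal (idealMl P_ideal u Px) (idealMl P_ideal v Py)).
Qed.

Lemma prime_ideal_nsub_bigcap (J : finType) (D : J -> Prop) (Q : J -> B -> Prop) :
  (forall j, D j -> is_ideal (Q j)) ->
  (forall j, D j -> exists2 e, Q j e & ~ P e) ->
  exists2 d, ~ P d & forall j, D j -> Q j d.
Proof.
move=> Q_ideal QnsubP.
have witness j : exists e : B, ~ P e /\ (D j -> Q j e).
  have [/QnsubP[e Qe nPe]|nDj] := pselect (D j); first by exists e.
  by exists 1; split; [apply: prime_ideal_neq1|].
have [e He] := fin_all_exists witness.
exists (\prod_j e j).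
  apply: (big_ind (fun d => ~ P d)) => [|d d'|j _].
  - exact: prime_ideal_neq1.
  - exact: prime_idealMn.
  - exact: (He j).1.
move=> j Dj; rewrite (bigD1 j) //=.
exact: (idealMr (Q_ideal j Dj) _ ((He j).2 Dj)).
Qed.

End PrimeIdealTheory.

Lemma prime_avoidance (J : finType) (P : J -> B -> Prop) (A : B -> Prop)
    (S : {set J}) :
  is_ideal A -> (forall i, i \in S -> is_prime_ideal (P i)) ->
  (forall i, i \in S -> exists2 a, A a & ~ P i a) ->
  exists2 a, A a & forall i, i \in S -> ~ P i a.
Proof.
move=> A_ideal; move: {2}#|S|.+1 (ltnSn #|S|) => n; elim: n S => // n IHn S.
rewrite ltnS => cardS P_prime AnsubP; apply: contrapT => noavoid.
have P_ideal j : j \in S -> is_ideal (P j) by move/P_prime/prime_ideal_ideal.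
have avoid_others i : i \in S ->
    exists2 a, A a & P i a /\ forall j, j \in S :\ i -> ~ P j a.
  move=> iS; have [|j|j|a Aa nPa] := IHn (S :\ i).
  - by rewrite (cardsD1 i) iS in cardS.
  - by move=> /setD1P[_ /P_prime].
  - by move=> /setD1P[_ /AnsubP].
  exists a => //; split => //; apply: contrapT => nPia; apply: noavoid.
  exists a => // j jS; have [->//|ji] := eqVneq j i.
  by apply: nPa; rewrite in_setD1 ji.
have [S0|[i iS]] := set_0Vmem S.
  by apply: noavoid; exists 0 => [|i]; [apply: ideal0 | rewrite S0 inE].
have [a Aa [Pia nPa]] := avoid_others i iS.
have [b Ab nPib] := AnsubP i iS.
have [c nPic Pc] : exists2 c, ~ P i c & forall j, j \in S :\ i -> P j c.
  apply: prime_ideal_nsub_bigcap => [|j /setD1P[_ /P_ideal]//|].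
    exact: P_prime.
  move=> j /setD1P[ji jS]; have [e _ [Pje nPe]] := avoid_others j jS.
  by exists e => //; apply: nPe; rewrite in_setD1 eq_sym ji.
(* [a] lies in [P i] alone, [b * c] in every [P j] but [P i]. *)
apply: noavoid; exists (a + b * c).
  exact: (idealD A_ideal Aa (idealMr A_ideal c Ab)).
move=> j jS; have [->|ji] := eqVneq j i.
  move=> /(idealDl (P_ideal i iS) Pia).
  exact: (prime_idealMn (P_prime i iS) nPib nPic).
have jSi : j \in S :\ i by rewrite in_setD1 ji.
have Pjbc : P j (b * c) := idealMl (P_ideal j jS) b (Pc j jSi).
by move=> /(idealDr (P_ideal j jS) Pjbc); apply: nPa.
Qed.

Section AvoidingPrimeFamily.
Variables (J : finType) (nu : J -> B -> Prop) (x : B).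
Hypothesis nu_prime : forall i, is_prime_ideal (nu i).

Definition nsub_x_primes j := forall k, nu k x -> exists2 d, nu j d & ~ nu k d.

Lemma exists_x_primes_avoiding (alpha : B -> Prop) : is_ideal alpha ->
  (forall i, nu i x -> exists2 a, alpha a & ~ nu i a) ->
  exists a, [/\ alpha a, forall i, nu i x -> ~ nu i a &
                forall j, nsub_x_primes j -> nu j a].
Proof.
move=> alpha_ideal alpha_nsub.
pose A a := alpha a /\ forall j, nsub_x_primes j -> nu j a.
have nu_ideal j : is_ideal (nu j) by apply: prime_ideal_ideal.
have A_ideal : is_ideal A by apply: is_ideal_cap => //; apply: is_ideal_bigcap.
have [i _|i|a [Aa Da] nua] :=
  prime_avoidance (P := nu) (S := [set i | `[< nu i x >]]) A_ideal.
- exact: nu_prime.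
- rewrite inE => /asboolP xi.
  have [a0 Aa0 nua0] := alpha_nsub i xi.
  have [j _|j /(_ i xi)//|d nud Dd] :=
    prime_ideal_nsub_bigcap (nu_prime i) (D := nsub_x_primes) (Q := nu).
    exact: nu_ideal.
  exists (a0 * d); last exact: (prime_idealMn (nu_prime i)).
  by split=> [|j Dj]; [apply: idealMr | apply: idealMl; [|apply: Dd]].
by exists a; split=> // i xi; apply: nua; rewrite inE; apply/asboolP.
Qed.

Lemma x_primes_avoiding_notin y a c i : (exists u v, u * x + v * y = 1) ->
  (forall k, nu k x -> ~ nu k a) -> (forall j, nsub_x_primes j -> nu j a) ->
  ~ nu i (x + a * y ^+ c).
Proof.
move=> xy nua Da nui.
have [[k xk sub_ik]|nsub] :=
  pselect (exists2 k, nu k x & forall d, nu i d -> nu k d).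
  exact: (prime_ideal_comax_notin (nu_prime k) xy xk (nua k xk) (sub_ik _ nui)).
have Di : nsub_x_primes i.
  by move=> k xk; apply/existsPNP => sub_ik; apply: nsub; exists k.
have nu_ideal := prime_ideal_ideal (nu_prime i).
have nui_ayc := idealMr nu_ideal (y ^+ c) (Da i Di).
have xi : nu i x by apply/(idealDr nu_ideal nui_ayc).
by have [d] := Di i xi.
Qed.

End AvoidingPrimeFamily.

End Ideals.

Theorem lemma7p1 (B : comPzRingType) (x y : B)
  (Hxy : exists u v : B, u * x + v * y = 1)
  (alpha : B -> Prop) (Halpha : is_ideal alpha)
  (p : nat) (nu : 'I_p -> B -> Prop) (Hnu : forall i, is_prime_ideal (nu i))
  (H : forall a, alpha a -> exists c0 : nat, forall c : nat, (c0 <= c)%N ->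
         exists i : 'I_p, nu i (x + a * y ^+ c)) :
  exists i : 'I_p, forall b a : B, alpha a -> nu i (b * x + a).
Proof.
apply: contrapT => none.
have alpha_nsub i : nu i x -> exists2 a, alpha a & ~ nu i a.
  move=> xi; apply/existsPNP => alpha_sub; apply: none; exists i => b a alpha_a.
  have nu_ideal := prime_ideal_ideal (Hnu i).
  exact: (idealD nu_ideal (idealMl nu_ideal b xi) (alpha_sub a alpha_a)).
have [a [alpha_a nua Da]] := exists_x_primes_avoiding Hnu Halpha alpha_nsub.
have [c0 Hc] := H a alpha_a.
have [i nui] := Hc c0 (leqnn c0).
exact: (x_primes_avoiding_notin Hnu Hxy nua Da nui).
Qed.
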